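(* For every $n\in\mathbb N$, $\mathbb{T}_n$ (with the maps $\mathbb{T}_n(f)$ and supports $\operatorname{supp}^{\mathbb{T}_n}$) and $\mathbb{T}_{n+1}^-$ (with the maps $\mathbb{T}_{n+1}^-(f)$ and supports $\operatorname{supp}^{\mathbb{T}_{n+1}^-}$) are normal PO-dilators.
   Context: A quasi embedding between partial orders $X,Y$ is a function $f$ with $f(x)\leq_Y f(y)\Rightarrow x\leq_X y$; an embedding also satisfies the converse. $\mathrm{PO}$ is the category of partial orders and quasi embeddings. $[X]^{<\omega}$ denotes the finite subsets of $X$, with $[f]^{<\omega}(a)=\{f(x)\mid x\in a\}$. A PO-dilator is a functor $W:\mathrm{PO}\to\mathrm{PO}$ mapping embeddings to embeddings, with a natural transformation $\operatorname{supp}^W:W\Rightarrow[\cdot]^{<\omega}$ such that for every embedding $f:X\to Y$, $\operatorname{rng}(W(f))=\{\sigma\in W(Y)\mid\operatorname{supp}^W_Y(\sigma)\subseteq\operatorname{rng}(f)\}$. For finite $a,b\subseteq X$, $a\leq^{\mathrm{fin}}_X b$ iff every $x\in a$ has some $y\in b$ with $x\leq_X y$. $W$ is normal if $\sigma\leq_{W(X)}\tau$ implies $\operatorname{supp}^W_X(\sigma)\leq^{\mathrm{fin}}_X\operatorname{supp}^W_X(\tau)$. For a partial order $X$, $M(X)$ is the set of finite multisets $[x_0,\dots,x_{m-1}]$ with elements from $X$, ordered by $[x_0,\dots,x_{m-1}]\leq_{M(X)}[y_0,\dots,y_{k-1}]$ iff there is an injection $g$ with $x_i\leq_X y_{g(i)}$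 for all $i<m$. For $n\in\mathbb N$ and a partial order $X$, $\mathbb{T}_n(X)$ is generated by: $\overline x$ for each $x\in X$; $i\star\sigma$ for each $\sigma=[t_0,\dots,t_{m-1}]\in M(\mathbb{T}_n(X))$ and $i<n$. For $n>0$, $\mathbb{T}_n^-(X)=\{\overline x\mid x\in X\}\cup\{0\star\sigma\mid\sigma\in M(\mathbb{T}_n(X))\}$. The relation $\leq_{\mathbb{T}_n(X)}$ is defined recursively: $\overline x\leq t$ iff either $t=\overline y$ with $x\leq_X y$, or $t=j\star[t_0,\dots,t_{m-1}]$ and $\overline x\leq t_l$ for some $l<m$; $i\star\sigma\leq t$ iff either $t=i\star\tau$ with $\sigma\leq_{M(\mathbb{T}_n(X))}\tau$, or $t=j\star[t_0,\dots,t_{m-1}]$ with $j\geq i$ and $i\star\sigma\leq t_l$ for some $l<m$. This is a partial order; $\leq_{\mathbb{T}_n^-(X)}$ is its restriction to $\mathbb{T}_n^-(X)$. For a quasi embedding $f:X\to Y$, $\mathbb{T}_n(f)(\overline x)=\overline{f(x)}$ and $\mathbb{T}_n(f)(i\star[t_0,\dots,t_{m-1}])=i\star[\mathbb{T}_n(f)(t_0),\dots,\mathbb{T}_n(f)(t_{m-1})]$; $\mathbb{T}_n^-(f)$ is its restriction $\mathbb{T}_n^-(X)\to\mathbb{T}_n^-(Y)$. Supports: $\operatorname{supp}^{\mathbb{T}_n}_X(\overline x)=\{x\}$, $\operatorname{supp}^{\mathbb{T}_n}_X(i\star[t_0,\dots,t_{m-1}])=\bigcup_{l<m}\operatorname{supp}^{\mathbb{T}_n}_X(t_l)$;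 $\operatorname{supp}^{\mathbb{T}_n^-}_X$ is its restriction to $\mathbb{T}_n^-(X)$. *)

From Stdlib Require Import List Arith Lia ClassicalEpsilon.
Import ListNotations.

Record ord := Ord { car :> Type; rel : car -> car -> Prop }.
Arguments rel {o} _ _.

Definition is_po (X : ord) : Prop :=
  (forall x : X, rel x x) /\
  (forall x y : X, rel x y -> rel y x -> x = y) /\
  (forall x y z : X, rel x y -> rel y z -> rel x z).

Definition quasi_emb {X Y : ord} (f : X -> Y) : Prop :=
  forall x y : X, rel (f x) (f y) -> rel x y.

Definition emb {X Y : ord} (f : X -> Y) : Prop :=
  forall x y : X, rel (f x) (f y) <-> rel x y.

Definition is_finite {A : Type} (a : A -> Prop) : Prop :=
  exists l : list A, forall x, a x <-> In x l.

Definition img {A B : Type} (f : A -> B) (a : A -> Prop) : B -> Prop :=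
  fun y => exists x, a x /\ f x = y.

Definition fin_le {X : ord} (a b : X -> Prop) : Prop :=
  forall x, a x -> exists y, b y /\ rel x y.

(* The morphism part is given on all functions; the dilator conditions
   below only constrain it on quasi embeddings between partial orders. *)
Record PO_functor := POFun {
  Fobj : ord -> ord;
  Fmap : forall X Y : ord, (X -> Y) -> Fobj X -> Fobj Y }.
Arguments Fmap p {X Y} _ _.

Definition PO_dilator (W : PO_functor) (supp : forall X : ord, Fobj W X -> X -> Prop) : Prop :=
  (forall X : ord, is_po X -> is_po (Fobj W X)) /\
  (forall (X Y : ord) (f : X -> Y), is_po X -> is_po Y -> quasi_emb f ->
     quasi_emb (Fmap W f)) /\
  (forall X : ord, is_po X -> forall s : Fobj W X, Fmap W (fun x : X => x) s = s) /\
  (forall (X Y Z : ord) (f : X -> Y) (g : Y -> Z),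
     is_po X -> is_po Y -> is_po Z -> quasi_emb f -> quasi_emb g ->
     forall s : Fobj W X, Fmap W (fun x => g (f x)) s = Fmap W g (Fmap W f s)) /\
  (forall (X Y : ord) (f : X -> Y), is_po X -> is_po Y -> emb f -> emb (Fmap W f)) /\
  (forall X : ord, is_po X -> forall s : Fobj W X, is_finite (supp X s)) /\
  (forall (X Y : ord) (f : X -> Y), is_po X -> is_po Y -> quasi_emb f ->
     forall (s : Fobj W X) (y : Y), supp Y (Fmap W f s) y <-> img f (supp X s) y) /\
  (forall (X Y : ord) (f : X -> Y), is_po X -> is_po Y -> emb f ->
     forall t : Fobj W Y,
       (exists s : Fobj W X, Fmap W f s = t) <->
       (forall y, supp Y t y -> exists x, f x = y)).

Definition normal (W : PO_functor) (supp : forall X : ord, Fobj W X -> X -> Prop) : Prop :=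
  forall X : ord, is_po X -> forall s t : Fobj W X,
    rel s t -> fin_le (supp X s) (supp X t).

Definition normal_PO_dilator W supp : Prop := PO_dilator W supp /\ normal W supp.

Definition lab (n : nat) : Type := {i : nat | i < n}.

Inductive rtree (L A : Type) : Type :=
| rleaf : A -> rtree L A
| rnode : L -> list (rtree L A) -> rtree L A.
Arguments rleaf {L A} _.
Arguments rnode {L A} _ _.

(* Multiset comparison: [x_0..x_{m-1}] related to [y_0..y_{k-1}] via
   an injection g with P_{g(i)}(x_i), where P_j is "related to y_j". *)
Definition mrel {A : Type} (ss : list A) (P : list (A -> Prop)) : Prop :=
  exists g : nat -> nat,
    (forall k l, k < length ss -> l < length ss -> g k = g l -> k = l) /\
    (forall k a, nth_error ss k = Some a ->
       exists p, nth_error P (g k) = Some p /\ p a).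

(* Equality of the multisets-based terms (the raw terms are lists, so
   they are identified up to permutation, recursively). *)
Fixpoint req {L A : Type} (s t : rtree L A) {struct t} : Prop :=
  match t with
  | rleaf y => match s with rleaf x => x = y | rnode _ _ => False end
  | rnode j ts =>
      let P := map (fun u => fun a => req a u) ts in
      match s with
      | rleaf _ => False
      | rnode i ss => i = j /\ length ss = length P /\ mrel ss P
      end
  end.

(* The order <=_{T_n(X)}, on raw terms (lv reads off the numeric label). *)
Fixpoint rle {L A : Type} (lv : L -> nat) (R : A -> A -> Prop)
         (s t : rtree L A) {struct t} : Prop :=
  match t with
  | rleaf y => match s with rleaf x => R x y | rnode _ _ => False end
  | rnode j ts =>
      let P := map (fun u => fun a => rle lv R a u) ts in
      match s with
      | rleaf _ => exists p, In p P /\ p s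
      | rnode i ss => (i = j /\ mrel ss P) \/ (lv i <= lv j /\ exists p, In p P /\ p s)
      end
  end.

Fixpoint rmap {L A B : Type} (f : A -> B) (t : rtree L A) : rtree L B :=
  match t with
  | rleaf x => rleaf (f x)
  | rnode i ts => rnode i (map (rmap f) ts)
  end.

Fixpoint rsupp {L A : Type} (t : rtree L A) : A -> Prop :=
  match t with
  | rleaf x => fun y => y = x
  | rnode _ ts => fun y => exists p, In p (map rsupp ts) /\ p y
  end.

(* T_n(X) as the quotient of raw terms by req                          *)

Definition Tcar (n : nat) (X : ord) : Type :=
  {P : rtree (lab n) X -> Prop | exists t, P = (fun u => req u t)}.

Definition cls {n : nat} {X : ord} (t : rtree (lab n) X) : Tcar n X :=
  exist _ (fun u => req u t) (ex_intro _ t eq_refl).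

Definition repr {n : nat} {X : ord} (a : Tcar n X) : rtree (lab n) X :=
  proj1_sig (constructive_indefinite_description _ (proj2_sig a)).

Definition labval {n : nat} (i : lab n) : nat := proj1_sig i.

Definition Tord (n : nat) (X : ord) : ord :=
  Ord (Tcar n X) (fun a b => rle labval (@rel X) (repr a) (repr b)).

Definition Tmap (n : nat) {X Y : ord} (f : X -> Y) (a : Tord n X) : Tord n Y :=
  cls (rmap f (repr a)).

Definition T (n : nat) : PO_functor := POFun (Tord n) (fun X Y f => Tmap n f).

Definition Tsupp (n : nat) (X : ord) (a : Fobj (T n) X) : X -> Prop :=
  rsupp (repr a).

(* T^-_{n+1}(X): terms \overline x or 0 * sigma                       *)

Definition root_ok {n : nat} {A : Type} (t : rtree (lab n) A) : Prop :=
  match t with rleaf _ => True | rnode i _ => labval i = 0 end.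

Lemma rtree_ind' (L A : Type) (P : rtree L A -> Prop) :
  (forall x, P (rleaf x)) ->
  (forall i ts, Forall P ts -> P (rnode i ts)) ->
  forall t, P t.
Proof.
  intros Hl Hn. fix IH 1. intros [x|i ts].
  - apply Hl.
  - apply Hn. induction ts as [|u us IHus]; constructor; [apply IH | exact IHus].
Qed.

Lemma req_refl (L A : Type) (t : rtree L A) : req t t.
Proof.
  induction t as [x|i ts H] using rtree_ind'; simpl; auto.
  split; [reflexivity|]. split; [now rewrite length_map|].
  exists (fun k => k). split; [auto|].
  intros k a Hk. exists (fun b => req b a). split.
  - now rewrite nth_error_map, Hk.
  - rewrite Forall_forall in H. apply H. eapply nth_error_In; eauto.
Qed.

Lemma repr_spec (n : nat) (X : ord) (a : Tcar n X) :
  proj1_sig a = (fun u => req u (repr a)).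
Proof.
  unfold repr. destruct (constructive_indefinite_description _ _) as [t Ht]. exact Ht.
Qed.

Lemma req_root (n : nat) (A : Type) (s t : rtree (lab n) A) :
  req s t -> root_ok t -> root_ok s.
Proof.
  destruct t as [y|j ts]; destruct s as [x|i ss]; simpl; try tauto.
  intros [-> _]; auto.
Qed.

Lemma Tmap_root (n : nat) (X Y : ord) (f : X -> Y) (a : Tcar n X) :
  root_ok (repr a) -> root_ok (repr (Tmap n f a)).
Proof.
  intro H. apply (req_root _ _ _ (rmap f (repr a))).
  - pose proof (repr_spec n Y (Tmap n f a)) as E. simpl in E.
    assert (Hr := req_refl _ _ (repr (Tmap n f a))).
    change ((fun u => req u (repr (Tmap n f a))) (repr (Tmap n f a))) in Hr.
    rewrite <- E in Hr. exact Hr.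
  - destruct (repr a); simpl in *; auto.
Qed.

Definition Tmcar (n : nat) (X : ord) : Type :=
  {a : Tcar (S n) X | root_ok (repr a)}.

Definition Tmord (n : nat) (X : ord) : ord :=
  Ord (Tmcar n X) (fun a b => @rel (Tord (S n) X) (proj1_sig a) (proj1_sig b)).

Definition Tmmap (n : nat) {X Y : ord} (f : X -> Y) (a : Tmord n X) : Tmord n Y :=
  exist _ (Tmap (S n) f (proj1_sig a)) (Tmap_root _ _ _ f _ (proj2_sig a)).

(* Tminus n is T^-_{n+1} *)
Definition Tminus (n : nat) : PO_functor := POFun (Tmord n) (fun X Y f => Tmmap n f).

Definition Tmsupp (n : nat) (X : ord) (a : Fobj (Tminus n) X) : X -> Prop :=
  Tsupp (S n) X (proj1_sig a).

(* Terms of T_n(X) are finite trees with labelled nodes and leaves in X, taken modulo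
   permuting the children of each node; order, functorial action and support are defined
   on raw trees and respect this equivalence.  All order properties reduce to the lifting of
   a relation to lists along an injection of indices.  Antisymmetry is the one delicate
   point: two such injections compose to a permutation of a finite set, and following the
   finite orbits of that permutation turns two one-sided comparisons into a two-sided one.
   Normality holds because each leaf below s is dominated by a leaf below t whenever s <= t.
   T^-_{n+1} is the subfunctor of T_{n+1} given by a condition on the root label, which is
   reflected by the functorial action, so it inherits everything from T_{n+1}. *)

From Stdlib Require Import List Arith Lia Classical FunctionalExtensionality
  PropExtensionality ProofIrrelevance FinFun.
Import ListNotations.

Lemma bInjective_le n m (f : nat -> nat) :
  bInjective n f -> (forall x, x < n -> f x < m) -> n <= m.
Proof.
  intros Hinj Hf. destruct (le_lt_dec n m) as [Hnm|Hmn]; [exact Hnm|exfalso].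
  assert (Hb : bFun n f) by (intros x Hx; specialize (Hf x Hx); lia).
  destruct (proj1 (bInjective_bSurjective Hb) Hinj m Hmn) as [x [Hx Efx]].
  specialize (Hf x Hx). lia.
Qed.

Lemma pigeonhole n m (f : nat -> nat) :
  m < n -> (forall x, x < n -> f x < m) -> exists x y, x < y < n /\ f x = f y.
Proof.
  intros Hmn Hf. apply NNPP. intros Hno.
  enough (Hinj : bInjective n f) by (pose proof (bInjective_le n m f Hinj Hf); lia).
  intros x y Hx Hy E. destruct (lt_eq_lt_dec x y) as [[Hxy|Exy]|Hyx]; [|exact Exy|];
    exfalso; apply Hno; [exists x, y | exists y, x]; auto.
Qed.

Lemma iter_bFun n p : bFun n p -> forall m, bFun n (Nat.iter m p).
Proof. intros Hp m; induction m; intros x Hx; simpl; auto. Qed.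

Lemma iter_bInjective n p :
  bFun n p -> bInjective n p -> forall m, bInjective n (Nat.iter m p).
Proof.
  intros Hp Hinj m; induction m as [|m IH]; intros x y Hx Hy E; simpl in E; [exact E|].
  apply IH; auto. apply Hinj; auto; apply iter_bFun; auto.
Qed.

Lemma bInjective_orbit n p :
  bFun n p -> bInjective n p -> forall k, k < n -> exists m, Nat.iter (S m) p k = k.
Proof.
  intros Hp Hinj k Hk.
  destruct (pigeonhole (S n) n (fun i => Nat.iter i p k)) as [x [y [Hxy E]]];
    [lia | intros; apply iter_bFun; auto |].
  exists (y - x - 1). replace (S (y - x - 1)) with (y - x) by lia.
  apply (iter_bInjective n p Hp Hinj x); [apply iter_bFun; auto | exact Hk |].
  rewrite <- Nat.iter_add. replace (x + (y - x)) with y by lia. symmetry. exact E.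
Qed.

Definition mlift {A B} (r : A -> B -> Prop) (l1 : list A) (l2 : list B) : Prop :=
  exists g, bInjective (length l1) g /\
    forall k a, nth_error l1 k = Some a -> exists b, nth_error l2 (g k) = Some b /\ r a b.

Lemma mrel_mlift {A B} (r : A -> B -> Prop) ss ts :
  mrel ss (map (fun u a => r a u) ts) <-> mlift r ss ts.
Proof.
  split; intros [g [Hg Hrg]]; exists g; split; auto; intros k a Hk.
  - destruct (Hrg k a Hk) as [p [Hp Hpa]]. rewrite nth_error_map in Hp.
    destruct (nth_error ts (g k)) as [b|]; inversion Hp; subst. eauto.
  - destruct (Hrg k a Hk) as [b [Hb Hab]]. exists (fun a => r a b).
    rewrite nth_error_map, Hb. auto.
Qed.

Lemma mlift_index_bound {A B} (r : A -> B -> Prop) l1 l2 g :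
  (forall k a, nth_error l1 k = Some a -> exists b, nth_error l2 (g k) = Some b /\ r a b) ->
  forall k, k < length l1 -> g k < length l2.
Proof.
  intros Hrg k Hk. apply nth_error_Some in Hk.
  destruct (nth_error l1 k) as [a|] eqn:Ea; [|congruence].
  destruct (Hrg k a Ea) as [b [Hb _]]. apply nth_error_Some. congruence.
Qed.

Lemma mlift_In {A B} (r : A -> B -> Prop) l1 l2 a :
  mlift r l1 l2 -> In a l1 -> exists b, In b l2 /\ r a b.
Proof.
  intros [g [_ Hrg]] Ha. destruct (In_nth_error _ _ Ha) as [k Hk].
  destruct (Hrg k a Hk) as [b [Hb Hab]]. eauto using nth_error_In.
Qed.

Lemma mlift_impl {A B} (r r' : A -> B -> Prop) l1 l2 :
  (forall a b, In a l1 -> In b l2 -> r a b -> r' a b) -> mlift r l1 l2 -> mlift r' l1 l2.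
Proof.
  intros H [g [Hg Hrg]]. exists g. split; [exact Hg|]. intros k a Ha.
  destruct (Hrg k a Ha) as [b [Hb Hab]]. exists b. split; [exact Hb|].
  apply H; eauto using nth_error_In.
Qed.

Lemma mlift_trans {A B C} (r1 : A -> B -> Prop) (r2 : B -> C -> Prop) (r3 : A -> C -> Prop)
  l1 l2 l3 :
  (forall a b c, In a l1 -> In b l2 -> In c l3 -> r1 a b -> r2 b c -> r3 a c) ->
  mlift r1 l1 l2 -> mlift r2 l2 l3 -> mlift r3 l1 l3.
Proof.
  intros H [g [Hg Hrg]] [h [Hh Hrh]]. exists (fun k => h (g k)). split.
  - intros k l Hk Hl E. pose proof (mlift_index_bound _ _ _ _ Hrg) as Hgb. auto.
  - intros k a Ha. destruct (Hrg _ _ Ha) as [b [Hb Hab]].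
    destruct (Hrh _ _ Hb) as [c [Hc Hbc]]. eauto 10 using nth_error_In.
Qed.

Lemma mlift_length {A B} (r : A -> B -> Prop) l1 l2 : mlift r l1 l2 -> length l1 <= length l2.
Proof. intros [g [Hg Hrg]]. exact (bInjective_le _ _ g Hg (mlift_index_bound _ _ _ _ Hrg)). Qed.

Lemma mlift_flip {A B} (r : A -> B -> Prop) l1 l2 :
  length l1 = length l2 -> mlift r l1 l2 -> mlift (fun b a => r a b) l2 l1.
Proof.
  intros Hlen [g [Hg Hrg]].
  assert (Hgb : bFun (length l1) g)
    by (intros k Hk; rewrite Hlen; exact (mlift_index_bound _ _ _ _ Hrg k Hk)).
  destruct (bSurjective_bBijective Hgb (proj1 (bInjective_bSurjective Hgb) Hg))
    as [g' [Hg'b Hgg']].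
  exists g'. split.
  - intros k l Hk Hl E. rewrite <- Hlen in Hk, Hl.
    rewrite <- (proj2 (Hgg' k Hk)), <- (proj2 (Hgg' l Hl)), E. reflexivity.
  - intros l b Hb.
    assert (Hl : l < length l1) by (rewrite Hlen; apply nth_error_Some; congruence).
    destruct (nth_error l1 (g' l)) as [a|] eqn:Ha;
      [|apply nth_error_None in Ha; specialize (Hg'b l Hl); lia].
    exists a. split; [reflexivity|].
    destruct (Hrg _ _ Ha) as [b' [Hb' Hab']]. rewrite (proj2 (Hgg' l Hl)), Hb in Hb'.
    congruence.
Qed.

Lemma mlift_map {A B C D} (f : A -> C) (f' : B -> D) (r : C -> D -> Prop) l1 l2 :
  mlift r (map f l1) (map f' l2) <-> mlift (fun a b => r (f a) (f' b)) l1 l2.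
Proof.
  unfold mlift. rewrite length_map.
  split; intros [g [Hg Hrg]]; exists g; split; auto; intros k a Ha.
  - destruct (Hrg k (f a)) as [d [Hd Hr]]; [rewrite nth_error_map, Ha; reflexivity|].
    rewrite nth_error_map in Hd.
    destruct (nth_error l2 (g k)) as [b|]; inversion Hd; subst. eauto.
  - rewrite nth_error_map in Ha.
    destruct (nth_error l1 k) as [c|] eqn:Ec; inversion Ha; subst.
    destruct (Hrg k c Ec) as [b [Hb Hr]]. exists (f' b). rewrite nth_error_map, Hb. auto.
Qed.

Lemma mlift_antisym {A} (r : A -> A -> Prop) l1 l2 :
  (forall a b c, r a b -> r b c -> r a c) ->
  mlift r l1 l2 -> mlift r l2 l1 -> mlift (fun a b => r a b /\ r b a) l1 l2.
Proof.
  intros Htr [g [Hg Hrg]] [h [Hh Hrh]].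
  pose proof (mlift_index_bound _ _ _ _ Hrg) as Hgb.
  pose proof (mlift_index_bound _ _ _ _ Hrh) as Hhb.
  set (p := fun k => h (g k)).
  assert (Hpb : bFun (length l1) p) by (intros k Hk; apply Hhb, Hgb, Hk).
  assert (Hpi : bInjective (length l1) p) by (intros k l Hk Hl E; apply Hg, Hh; auto).
  assert (Hchain : forall m k b, nth_error l2 (g k) = Some b ->
            exists a, nth_error l1 (Nat.iter (S m) p k) = Some a /\ r b a).
  { induction m as [|m IH]; intros k b Hb; [exact (Hrh _ _ Hb)|].
    destruct (IH k b Hb) as [a [Ha Hba]].
    destruct (Hrg _ _ Ha) as [b' [Hb' Hab']]. destruct (Hrh _ _ Hb') as [a' [Ha' Hb'a']].
    exists a'. split; [exact Ha'|]. eauto. }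
  exists g. split; [exact Hg|]. intros k a Ha.
  destruct (Hrg _ _ Ha) as [b [Hb Hab]]. exists b. split; [exact Hb|]. split; [exact Hab|].
  assert (Hk : k < length l1) by (apply nth_error_Some; congruence).
  destruct (bInjective_orbit _ p Hpb Hpi k Hk) as [m Hm].
  destruct (Hchain m k b Hb) as [a' [Ha' Hba']]. rewrite Hm, Ha in Ha'. congruence.
Qed.

Lemma ex_In_map {U V} (F : U -> V -> Prop) (ts : list U) (s : V) :
  (exists p, In p (map F ts) /\ p s) <-> exists u, In u ts /\ F u s.
Proof.
  split.
  - intros [p [Hp Hs]]. apply in_map_iff in Hp as [u [<- Hu]]. eauto.
  - intros [u [Hu Hs]]. exists (F u). split; [apply in_map|]; assumption.
Qed.

Section RawTrees.

Context {L A : Type}.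

Lemma req_node (i j : L) (ss ts : list (rtree L A)) :
  req (rnode i ss) (rnode j ts) <-> i = j /\ length ss = length ts /\ mlift req ss ts.
Proof. simpl. rewrite length_map, mrel_mlift. tauto. Qed.

Lemma req_sym (s t : rtree L A) : req s t -> req t s.
Proof.
  revert s. induction t as [y|j ts IH] using rtree_ind'; intros [x|i ss] H; try (simpl in *; tauto).
  - simpl in *. congruence.
  - rewrite Forall_forall in IH. apply req_node in H as [-> [Hlen M]]. apply req_node.
    split; [reflexivity|]. split; [congruence|].
    eapply mlift_impl; [|exact (mlift_flip _ _ _ Hlen M)]. auto.
Qed.

Lemma req_trans (s t u : rtree L A) : req s t -> req t u -> req s u.
Proof.
  revert s t. induction u as [z|k us IH] using rtree_ind';
    intros [x|i ss] [y|j ts] Hst Htu; try (simpl in *; tauto).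
  - simpl in *. congruence.
  - rewrite Forall_forall in IH. apply req_node in Hst as [-> [L1 M1]].
    apply req_node in Htu as [-> [L2 M2]]. apply req_node.
    split; [reflexivity|]. split; [congruence|].
    eapply mlift_trans; [|exact M1|exact M2]. eauto.
Qed.

Lemma rsupp_node (i : L) (ts : list (rtree L A)) (y : A) :
  rsupp (rnode i ts) y <-> exists u, In u ts /\ rsupp u y.
Proof. apply ex_In_map. Qed.

Lemma rsupp_req (s t : rtree L A) (y : A) : req s t -> rsupp s y -> rsupp t y.
Proof.
  revert s. induction t as [z|j ts IH] using rtree_ind'; intros [x|i ss] H Hs;
    try (simpl in *; tauto).
  - simpl in *. congruence.
  - rewrite Forall_forall in IH. apply req_node in H as [_ [_ M]].
    apply rsupp_node in Hs as [a [Ha Hs]]. destruct (mlift_In _ _ _ _ M Ha) as [b [Hb Hab]].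
    apply rsupp_node. eauto.
Qed.

Lemma rsupp_finite (t : rtree L A) : is_finite (rsupp t).
Proof.
  induction t as [x|i ts IH] using rtree_ind'.
  - exists [x]. intros y. simpl. intuition.
  - induction IH as [|u us [l1 H1] _ [l2 H2]].
    + exists []. intros y. simpl. firstorder.
    + exists (l1 ++ l2). intros y. rewrite in_app_iff, <- H1, <- H2, !rsupp_node. simpl.
      firstorder congruence.
Qed.

Fixpoint height (t : rtree L A) : nat :=
  match t with rleaf _ => 0 | rnode _ ts => S (list_max (map height ts)) end.

Lemma height_child (i : L) (ts : list (rtree L A)) (u : rtree L A) :
  In u ts -> height u < height (rnode i ts).
Proof.
  intros Hu. simpl. apply Nat.lt_succ_r.
  assert (Hmax := proj1 (list_max_le (map height ts) _) (le_n _)).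
  rewrite Forall_forall in Hmax. apply Hmax, in_map, Hu.
Qed.

Lemma rmap_id (t : rtree L A) : rmap (fun x => x) t = t.
Proof.
  induction t as [x|i ts IH] using rtree_ind'; simpl; [reflexivity|].
  f_equal. induction IH; simpl; congruence.
Qed.

Section Order.

Variable lv : L -> nat.
Variable R : A -> A -> Prop.

Definition lab_le (j : L) (s : rtree L A) : Prop :=
  match s with rleaf _ => True | rnode i _ => lv i <= lv j end.

Lemma rle_leaf (s : rtree L A) (y : A) : rle lv R s (rleaf y) <-> exists x, s = rleaf x /\ R x y.
Proof.
  destruct s as [x|i ss]; simpl; split.
  - eauto.
  - intros [x' [E H]]. injection E as ->. exact H.
  - tauto.
  - intros [x' [E _]]. discriminate.
Qed.

Lemma rle_node (s : rtree L A) (j : L) (ts : list (rtree L A)) :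
  rle lv R s (rnode j ts) <->
  (exists ss, s = rnode j ss /\ mlift (rle lv R) ss ts) \/
  (lab_le j s /\ exists u, In u ts /\ rle lv R s u).
Proof.
  destruct s as [x|i ss]; simpl; rewrite ex_In_map.
  - split; [auto|]. intros [[ss [E _]]|[_ H]]; [discriminate|exact H].
  - rewrite mrel_mlift. split.
    + intros [[-> M]|H]; [left; eauto|right; exact H].
    + intros [[ss' [E M]]|H]; [injection E as -> <-; left; auto|right; exact H].
Qed.

Lemma rle_lab_le (j : L) (s t : rtree L A) : rle lv R s t -> lab_le j t -> lab_le j s.
Proof.
  destruct t as [y|k ts].
  - intros H _. apply rle_leaf in H as [x [-> _]]. exact I.
  - intros H Hk. apply rle_node in H as [[ss [-> _]]|[Hs _]]; simpl in *; [exact Hk|].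
    destruct s; simpl in *; lia.
Qed.

Lemma rle_height (s t : rtree L A) : rle lv R s t -> height s <= height t.
Proof.
  revert s. induction t as [y|j ts IH] using rtree_ind'; intros s H.
  - apply rle_leaf in H as [x [-> _]]. reflexivity.
  - rewrite Forall_forall in IH. apply rle_node in H as [[ss [-> M]]|[_ [u [Hu H]]]].
    + simpl. apply le_n_S, list_max_le, Forall_forall. intros h Hh.
      apply in_map_iff in Hh as [a [<- Ha]]. destruct (mlift_In _ _ _ _ M Ha) as [b [Hb Hab]].
      pose proof (height_child j ts b Hb). simpl in *. specialize (IH b Hb a Hab). lia.
    + pose proof (height_child j ts u Hu). specialize (IH u Hu s H). lia.
Qed.

Lemma rle_supp (s t : rtree L A) (x : A) :
  rle lv R s t -> rsupp s x -> exists y, rsupp t y /\ R x y.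
Proof.
  revert s. induction t as [z|j ts IH] using rtree_ind'; intros s H Hs.
  - apply rle_leaf in H as [x' [-> Hxz]]. simpl in Hs. subst.
    exists z. split; [reflexivity|exact Hxz].
  - rewrite Forall_forall in IH.
    assert (Hchild : forall s u, In u ts -> rle lv R s u -> rsupp s x ->
              exists y, rsupp (rnode j ts) y /\ R x y).
    { intros s' u Hu Hsu Hs'. destruct (IH u Hu s' Hsu Hs') as [y [Hy Hxy]].
      exists y. split; [apply rsupp_node; eauto|exact Hxy]. }
    apply rle_node in H as [[ss [-> M]]|[_ [u [Hu H]]]]; [|eauto].
    apply rsupp_node in Hs as [a [Ha Hs]]. destruct (mlift_In _ _ _ _ M Ha) as [b [Hb Hab]].
    eauto.
Qed.

Hypothesis R_refl : forall x, R x x.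
Hypothesis R_trans : forall x y z, R x y -> R y z -> R x z.
Hypothesis R_antisym : forall x y, R x y -> R y x -> x = y.

Lemma req_rle (s t : rtree L A) : req s t -> rle lv R s t.
Proof.
  revert s. induction t as [y|j ts IH] using rtree_ind'; intros [x|i ss] H;
    try (simpl in *; tauto).
  - simpl in *. subst. apply R_refl.
  - rewrite Forall_forall in IH. apply req_node in H as [-> [_ M]]. apply rle_node. left.
    exists ss. split; [reflexivity|]. eapply mlift_impl; [|exact M]. auto.
Qed.

Lemma rle_refl (t : rtree L A) : rle lv R t t.
Proof. apply req_rle, req_refl. Qed.

Lemma rle_trans (s t u : rtree L A) : rle lv R s t -> rle lv R t u -> rle lv R s u.
Proof.
  revert s t. induction u as [z|k us IH] using rtree_ind'; intros s t Hst Htu.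
  - apply rle_leaf in Htu as [y [-> Hyz]]. apply rle_leaf in Hst as [x [-> Hxy]].
    apply rle_leaf. eauto.
  - rewrite Forall_forall in IH. apply rle_node.
    apply rle_node in Htu as [[ts [-> M]]|[Hlab [c [Hc Htc]]]].
    + apply rle_node in Hst as [[ss [-> M']]|[Hlab [b [Hb Hsb]]]].
      * left. exists ss. split; [reflexivity|]. eapply mlift_trans; [|exact M'|exact M]. eauto.
      * right. split; [exact Hlab|]. destruct (mlift_In _ _ _ _ M Hb) as [c [Hc Hbc]]. eauto.
    + right. split; [eapply rle_lab_le; eauto|]. eauto.
Qed.

Lemma rle_req_compat (s s' t t' : rtree L A) :
  req s s' -> req t t' -> rle lv R s t -> rle lv R s' t'.
Proof.
  intros Hs Ht H. apply rle_trans with s; [apply req_rle, req_sym, Hs|].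
  apply rle_trans with t; [exact H|apply req_rle, Ht].
Qed.

(* A term strictly below a child of [t] is lower than [t] in height, so the comparison of
   two nodes in both directions must go through the multiset clause on both sides. *)
Lemma rle_antisym (s t : rtree L A) : rle lv R s t -> rle lv R t s -> req s t.
Proof.
  revert s. induction t as [y|j ts IH] using rtree_ind'; intros s Hst Hts.
  - apply rle_leaf in Hst as [x [-> Hxy]]. simpl in *. auto.
  - rewrite Forall_forall in IH.
    pose proof (rle_height _ _ Hst). pose proof (rle_height _ _ Hts).
    apply rle_node in Hst as [[ss [-> M]]|[_ [u [Hu Hsu]]]].
    + apply rle_node in Hts as [[ts' [E M']]|[_ [v [Hv Htv]]]].
      * injection E as <-. apply req_node. split; [reflexivity|].
        split; [apply Nat.le_antisymm; eapply mlift_length; eauto|].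
        eapply mlift_impl; [|exact (mlift_antisym _ _ _ rle_trans M M')].
        intros a b _ Hb [Hab Hba]. auto.
      * pose proof (rle_height _ _ Htv). pose proof (height_child j ss v Hv). lia.
    + pose proof (rle_height _ _ Hsu). pose proof (height_child j ts u Hu). lia.
Qed.

End Order.

End RawTrees.

Section RawMap.

Context {L A B : Type} (f : A -> B).

Lemma rmap_comp {C} (g : B -> C) (t : rtree L A) :
  rmap (fun x => g (f x)) t = rmap g (rmap f t).
Proof.
  induction t as [x|i ts IH] using rtree_ind'; simpl; [reflexivity|].
  f_equal. rewrite map_map. induction IH; simpl; congruence.
Qed.

Lemma rmap_req (s t : rtree L A) : req s t -> req (rmap f s) (rmap f t).
Proof.
  revert s. induction t as [y|j ts IH] using rtree_ind'; intros [x|i ss] H;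
    try (simpl in *; tauto).
  - simpl in *. congruence.
  - rewrite Forall_forall in IH. apply req_node in H as [-> [Hlen M]]. cbn [rmap].
    apply (proj2 (req_node _ _ _ _)). rewrite !length_map.
    split; [reflexivity|]. split; [exact Hlen|].
    apply mlift_map. eapply mlift_impl; [|exact M]. auto.
Qed.

Lemma rsupp_rmap (t : rtree L A) (y : B) :
  rsupp (rmap f t) y <-> exists x, rsupp t x /\ f x = y.
Proof.
  induction t as [x|i ts IH] using rtree_ind'.
  - simpl. split; [intros ->; eauto|intros [x' [-> <-]]; reflexivity].
  - rewrite Forall_forall in IH. cbn [rmap]. rewrite rsupp_node. split.
    + intros [u [Hu Hy]]. apply in_map_iff in Hu as [c [<- Hc]].
      apply IH in Hy as [x [Hx <-]]; [|exact Hc].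
      exists x. split; [apply rsupp_node; eauto|reflexivity].
    + intros [x [Hx <-]]. apply rsupp_node in Hx as [c [Hc Hx]].
      exists (rmap f c). split; [apply in_map, Hc|]. apply IH; eauto.
Qed.

Lemma rmap_surj (t : rtree L B) :
  (forall y, rsupp t y -> exists x, f x = y) -> exists s, rmap f s = t.
Proof.
  induction t as [y|j ts IH] using rtree_ind'; intros H.
  - destruct (H y eq_refl) as [x <-]. exists (rleaf x). reflexivity.
  - assert (Hts : exists ss, map (rmap f) ss = ts).
    { induction IH as [|u us Hu _ IHus]; [exists []; reflexivity|].
      destruct Hu as [s <-]; [intros y Hy; apply H, rsupp_node; simpl; eauto|].
      destruct IHus as [ss <-].
      { intros y Hy. apply H. apply rsupp_node in Hy as [v [Hv Hy]].
        apply rsupp_node. simpl. eauto. }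
      exists (s :: ss). reflexivity. }
    destruct Hts as [ss <-]. exists (rnode j ss). reflexivity.
Qed.

Lemma lab_le_rmap (lv : L -> nat) (j : L) (s : rtree L A) : lab_le lv j (rmap f s) = lab_le lv j s.
Proof. destruct s; reflexivity. Qed.

Lemma rle_rmap (lv : L -> nat) (R : A -> A -> Prop) (R' : B -> B -> Prop) (s t : rtree L A) :
  (forall x y, R x y -> R' (f x) (f y)) -> rle lv R s t -> rle lv R' (rmap f s) (rmap f t).
Proof.
  intros Hf. revert s. induction t as [y|j ts IH] using rtree_ind'; intros s H.
  - apply rle_leaf in H as [x [-> Hxy]]. simpl. auto.
  - rewrite Forall_forall in IH. cbn [rmap]. apply rle_node.
    apply rle_node in H as [[ss [-> M]]|[Hlab [u [Hu Hsu]]]].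
    + left. exists (map (rmap f) ss). split; [reflexivity|].
      apply mlift_map. eapply mlift_impl; [|exact M]. auto.
    + right. split; [rewrite lab_le_rmap; exact Hlab|].
      exists (rmap f u). split; [apply in_map|]; auto.
Qed.

Lemma rle_rmap_reflect (lv : L -> nat) (R : A -> A -> Prop) (R' : B -> B -> Prop)
  (s t : rtree L A) :
  (forall x y, R' (f x) (f y) -> R x y) -> rle lv R' (rmap f s) (rmap f t) -> rle lv R s t.
Proof.
  intros Hf. revert s. induction t as [y|j ts IH] using rtree_ind'; intros s H.
  - destruct s; simpl in *; auto.
  - rewrite Forall_forall in IH. cbn [rmap] in H. apply rle_node in H. apply rle_node.
    destruct H as [[ss' [E M]]|[Hlab [u' [Hu' Hsu]]]].
    + destruct s as [x|i ss]; [discriminate|]. injection E as -> <-.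
      left. exists ss. split; [reflexivity|].
      apply (mlift_map (rmap f) (rmap f)) in M. eapply mlift_impl; [|exact M]. auto.
    + right. split; [rewrite lab_le_rmap in Hlab; exact Hlab|].
      apply in_map_iff in Hu' as [u [<- Hu]]. eauto.
Qed.

End RawMap.

Lemma cls_eq n (X : ord) (s t : rtree (lab n) X) : req s t -> cls s = cls t.
Proof.
  intros H. apply eq_sig_hprop; [intros; apply proof_irrelevance|]. simpl.
  apply functional_extensionality. intros u. apply propositional_extensionality.
  split; intros Hu; eapply req_trans; eauto using req_sym.
Qed.

Lemma repr_cls n (X : ord) (t : rtree (lab n) X) : req (repr (cls t)) t.
Proof.
  pose proof (repr_spec n X (cls t)) as E. simpl in E.
  change ((fun u => req u t) (repr (cls t))). rewrite E. apply req_refl.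
Qed.

Lemma cls_repr n (X : ord) (a : Tcar n X) : cls (repr a) = a.
Proof.
  apply eq_sig_hprop; [intros; apply proof_irrelevance|]. symmetry. apply repr_spec.
Qed.

Lemma rle_repr_cls n (X : ord) (s t : rtree (lab n) X) : is_po X ->
  rle labval rel (repr (cls s)) (repr (cls t)) <-> rle labval rel s t.
Proof.
  intros [Hr [_ Ht]]. split; apply rle_req_compat; auto using repr_cls, req_sym.
Qed.

Lemma rsupp_repr_cls n (X : ord) (t : rtree (lab n) X) (x : X) :
  rsupp (repr (cls t)) x <-> rsupp t x.
Proof. split; apply rsupp_req; auto using repr_cls, req_sym. Qed.

Section TDilator.

Variable n : nat.

Lemma Tord_po (X : ord) : is_po X -> is_po (Tord n X).
Proof.
  intros [Hr [Ha Ht]]. split; [|split]; simpl.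
  - intros a. apply rle_refl, Hr.
  - intros a b Hab Hba. rewrite <- (cls_repr n X a), <- (cls_repr n X b).
    apply cls_eq. eapply rle_antisym; eauto.
  - intros a b c. apply rle_trans, Ht.
Qed.

Lemma Tmap_quasi_emb (X Y : ord) (f : X -> Y) :
  is_po Y -> quasi_emb f -> quasi_emb (Tmap n f).
Proof.
  intros HY Hf a b H. simpl in H |- *. unfold Tmap in H.
  rewrite rle_repr_cls in H by exact HY. exact (rle_rmap_reflect f labval rel rel _ _ Hf H).
Qed.

Lemma Tmap_emb (X Y : ord) (f : X -> Y) : is_po Y -> emb f -> emb (Tmap n f).
Proof.
  intros HY Hf a b. simpl. unfold Tmap. rewrite rle_repr_cls by exact HY. split.
  - apply rle_rmap_reflect. intros x y. apply Hf.
  - apply rle_rmap. intros x y. apply Hf.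
Qed.

Lemma Tmap_id (X : ord) (a : Tcar n X) : Tmap n (fun x : X => x) a = a.
Proof. unfold Tmap. rewrite rmap_id. apply cls_repr. Qed.

Lemma Tmap_comp (X Y Z : ord) (f : X -> Y) (g : Y -> Z) (a : Tcar n X) :
  Tmap n (fun x => g (f x)) a = Tmap n g (Tmap n f a).
Proof.
  unfold Tmap. rewrite rmap_comp. apply cls_eq, rmap_req, req_sym, repr_cls.
Qed.

Lemma Tsupp_finite (X : ord) (a : Tcar n X) : is_finite (Tsupp n X a).
Proof. apply rsupp_finite. Qed.

Lemma Tsupp_Tmap (X Y : ord) (f : X -> Y) (a : Tcar n X) (y : Y) :
  Tsupp n Y (Tmap n f a) y <-> img f (Tsupp n X a) y.
Proof. unfold Tsupp, Tmap, img. rewrite rsupp_repr_cls. apply rsupp_rmap. Qed.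

Lemma Tmap_range (X Y : ord) (f : X -> Y) (t : Tcar n Y) :
  (exists s, Tmap n f s = t) <-> (forall y, Tsupp n Y t y -> exists x, f x = y).
Proof.
  split.
  - intros [s <-] y Hy. apply Tsupp_Tmap in Hy as [x [_ Hx]]. eauto.
  - intros H. destruct (rmap_surj f (repr t) H) as [s Hs]. exists (cls s).
    rewrite <- (cls_repr n Y t). unfold Tmap. apply cls_eq.
    rewrite <- Hs. apply rmap_req, repr_cls.
Qed.

Lemma T_normal : normal (T n) (Tsupp n).
Proof. intros X _ s t H x Hx. exact (rle_supp labval rel _ _ x H Hx). Qed.

Lemma T_normal_PO_dilator : normal_PO_dilator (T n) (Tsupp n).
Proof.
  split; [split; [|split; [|split; [|split; [|split; [|split; [|split]]]]]]|].
  - exact Tord_po.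
  - intros X Y f _ HY. apply Tmap_quasi_emb, HY.
  - intros X _. apply Tmap_id.
  - intros X Y Z f g _ _ _ _ _. apply Tmap_comp.
  - intros X Y f _ HY. apply Tmap_emb, HY.
  - intros X _. apply Tsupp_finite.
  - intros X Y f _ _ _. apply Tsupp_Tmap.
  - intros X Y f _ _ _. apply Tmap_range.
  - exact T_normal.
Qed.

End TDilator.

Lemma Tmcar_eq n (X : ord) (a b : Tmcar n X) : proj1_sig a = proj1_sig b -> a = b.
Proof. apply eq_sig_hprop. intros; apply proof_irrelevance. Qed.

Lemma root_ok_Tmap_reflect n (X Y : ord) (f : X -> Y) (a : Tcar n X) :
  root_ok (repr (Tmap n f a)) -> root_ok (repr a).
Proof.
  intros H. unfold Tmap in H.
  apply (req_root _ _ (rmap f (repr a))) in H; [|apply req_sym, repr_cls].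
  destruct (repr a); exact H.
Qed.

(* Only the support condition needs that the root-label condition is reflected by [Tmap]. *)
Lemma Tminus_normal_PO_dilator n : normal_PO_dilator (Tminus n) (Tmsupp n).
Proof.
  destruct (T_normal_PO_dilator (S n))
    as [[Hpo [Hq [Hid [Hcomp [Hemb [Hfin [Hnat Hrange]]]]]]] Hnorm].
  split; [split; [|split; [|split; [|split; [|split; [|split; [|split]]]]]]|].
  - intros X HX. destruct (Hpo X HX) as [Hr [Ha Ht]]. split; [|split].
    + intros a. apply Hr.
    + intros a b Hab Hba. apply Tmcar_eq, Ha; assumption.
    + intros a b c. apply Ht.
  - intros X Y f HX HY Hf a b. apply (Hq X Y f HX HY Hf).
  - intros X HX a. apply Tmcar_eq, (Hid X HX).
  - intros X Y Z f g HX HY HZ Hf Hg a. apply Tmcar_eq, (Hcomp X Y Z f g HX HY HZ Hf Hg).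
  - intros X Y f HX HY Hf a b. apply (Hemb X Y f HX HY Hf).
  - intros X HX a. apply (Hfin X HX).
  - intros X Y f HX HY Hf a. apply (Hnat X Y f HX HY Hf).
  - intros X Y f HX HY Hf t. unfold Tmsupp. rewrite <- (Hrange X Y f HX HY Hf). split.
    + intros [s <-]. exists (proj1_sig s). reflexivity.
    + intros [s Hs]. simpl in Hs. assert (Hroot : root_ok (repr s)).
      { apply (root_ok_Tmap_reflect _ X Y f). rewrite Hs. exact (proj2_sig t). }
      exists (exist _ s Hroot). apply Tmcar_eq, Hs.
  - intros X HX a b. apply (Hnorm X HX).
Qed.

Theorem proposition5p5 (n : nat) :
  normal_PO_dilator (T n) (Tsupp n) /\
  normal_PO_dilator (Tminus n) (Tmsupp n).
Proof. split; [apply T_normal_PO_dilator|apply Tminus_normal_PO_dilator]. Qed.
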